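(* For every multifield morphism $\sigma:F\to K$ between special multifields, the restriction $\sigma|_{F^\bullet}:F^\bullet\to K^\bullet$ is a morphism of special groups (where $F^\bullet$, $K^\bullet$ carry the special group structures $\langle a,b\rangle\equiv\langle c,d\rangle$ iff $ab=cd$ and $a\in c+d$); the assignments $F\mapsto F^\bullet$, $\sigma\mapsto\sigma|_{F^\bullet}$ define a functor $S$ from the category $\mathcal{SMF}$ of special multifields to the category $\mathcal{SG}$ of special groups.
   Context: A multiring is a tuple $(R,+,\cdot,-,0,1)$ with $+:R\times R\to\mathcal P(R)\setminus\{\emptyset\}$ satisfying: $z\in x+y\Rightarrow x\in z+(-y)$ and $y\in(-x)+z$; $y\in0+x\iff y=x$; $+$ associative and commutative; $(R,\cdot,1)$ a commutative monoid; $a0=0$; $c\in a+b\Rightarrow cd\in ad+bd$. A multifield has every nonzero element invertible. A multiring morphism $f$ satisfies $c\in a+b\Rightarrow f(c)\in f(a)+f(b)$, $f(-a)=-f(a)$, $f(0)=0$, $f(ab)=f(a)f(b)$, $f(1)=1$. A special multifield is a multifield $F$ such that, with $F^\bullet=F\setminus\{0\}$: (i) $a^2=1$ for $a\in F^\bullet$; (ii) $a+(-a)=F$ for $a\in F^\bullet$; (iii) $ab=cd$ and $a\in c+d$ imply $c\in a+b$ ($a,b,c,d\in F^\bullet$); (iv) $ab=cd=ef$, $a\in c+d$, $c\in e+f$ imply $a\in e+f$; (v) if there are $x,y,z\in F^\bullet$ with $ax=cy$, $a=xz$, $c=yz$, $a\in c+y$, $b\in x+z$, $d\in y+z$, then there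 are $t,v,w\in F^\bullet$ with $bt=cv$, $b=tw$, $c=vw$, $b\in c+v$, $a\in t+w$, $d\in v+w$. $\mathcal{SMF}$ has special multifields as objects and multiring morphisms as morphisms. A special group is $(G,-1,\equiv)$ with $G$ a group of exponent 2, $-1\in G$, $\equiv$ a relation on $G\times G$ satisfying: (SG0) equivalence relation; (SG1) $\langle a,b\rangle\equiv\langle b,a\rangle$; (SG2) $\langle a,-a\rangle\equiv\langle1,-1\rangle$; (SG3) $\langle a,b\rangle\equiv\langle c,d\rangle\Rightarrow ab=cd$; (SG4) $\langle a,b\rangle\equiv\langle c,d\rangle\Rightarrow\langle a,-c\rangle\equiv\langle -b,d\rangle$; (SG5) $\langle a,b\rangle\equiv\langle c,d\rangle\Rightarrow\langle ga,gb\rangle\equiv\langle gc,gd\rangle$; (SG6) the relation on $G^3$ given by $\langle a_1,a_2,a_3\rangle\equiv\langle b_1,b_2,b_3\rangle$ iff $\exists x,y,z$ with $\langle a_1,x\rangle\equiv\langle b_1,y\rangle$, $\langle a_2,a_3\rangle\equiv\langle x,z\rangle$, $\langle b_2,b_3\rangle\equiv\langle y,z\rangle$ is transitive. A morphism of special groups $f:G\to H$ is a group homomorphism with $f(-1)=-1$ and $\langle a,b\rangle\equiv_G\langle c,d\rangle\Rightarrow\langle f(a),f(b)\rangle\equiv_H\langle f(c),f(d)\rangle$. *)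

(* [add x y z] means  z \in x + y  (the multivalued sum). *)
Record multiring_axioms (T : Type) (add : T -> T -> T -> Prop) (neg : T -> T)
    (zero one : T) (mul : T -> T -> T) : Prop := {
  ax_add_nonempty : forall x y, exists z, add x y z;
  ax_add_rev : forall x y z, add x y z -> add z (neg y) x /\ add (neg x) z y;
  ax_add_zero : forall x y, add zero x y <-> y = x;
  ax_add_assoc : forall x y z w,
      (exists t, add x y t /\ add t z w) <-> (exists t, add y z t /\ add x t w);
  ax_add_comm : forall x y z, add x y z <-> add y x z;
  ax_mul_assoc : forall a b c, mul a (mul b c) = mul (mul a b) c;
  ax_mul_comm : forall a b, mul a b = mul b a;
  ax_mul_one_l : forall a, mul one a = a;
  ax_mul_one_r : forall a, mul a one = a;
  ax_mul_zero : forall a, mul a zero = zero;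
  ax_distr : forall a b c d, add a b c -> add (mul a d) (mul b d) (mul c d)
}.

Record multiring := MultiRing {
  mr_car :> Type;
  mr_add : mr_car -> mr_car -> mr_car -> Prop;
  mr_neg : mr_car -> mr_car;
  mr_zero : mr_car;
  mr_one : mr_car;
  mr_mul : mr_car -> mr_car -> mr_car;
  mr_ax : multiring_axioms mr_car mr_add mr_neg mr_zero mr_one mr_mul
}.

Arguments mr_add {_}. Arguments mr_neg {_}. Arguments mr_zero {_}.
Arguments mr_one {_}. Arguments mr_mul {_}.

Definition is_multifield (F : multiring) : Prop :=
  (@mr_one F <> mr_zero) /\
  (forall a : F, a <> mr_zero -> exists b : F, mr_mul a b = mr_one).

Definition is_special (F : multiring) : Prop :=
  let nz (a : F) := a <> mr_zero in
  let add := @mr_add F in let mul := @mr_mul F in let neg := @mr_neg F in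
  (forall a, nz a -> mul a a = mr_one) /\
  (* (ii) a + (-a) = F *)
  (forall a x, nz a -> add a (neg a) x) /\
  (forall a b c d, nz a -> nz b -> nz c -> nz d ->
     mul a b = mul c d -> add c d a -> add a b c) /\
  (forall a b c d e f, nz a -> nz b -> nz c -> nz d -> nz e -> nz f ->
     mul a b = mul c d -> mul c d = mul e f -> add c d a -> add e f c ->
     add e f a) /\
  (forall a b c d, nz a -> nz b -> nz c -> nz d ->
     (exists x y z, nz x /\ nz y /\ nz z /\
        mul a x = mul c y /\ a = mul x z /\ c = mul y z /\
        add c y a /\ add x z b /\ add y z d) ->
     (exists t v w, nz t /\ nz v /\ nz w /\
        mul b t = mul c v /\ b = mul t w /\ c = mul v w /\
        add c v b /\ add t w a /\ add v w d)).

Record special_multifield := SpecialMultifield {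
  smf_mr :> multiring;
  smf_mf : is_multifield smf_mr;
  smf_special : is_special smf_mr
}.

Definition is_mr_morphism (F K : multiring) (f : F -> K) : Prop :=
  (forall a b c : F, mr_add a b c -> mr_add (f a) (f b) (f c)) /\
  (forall a : F, f (mr_neg a) = mr_neg (f a)) /\
  f mr_zero = mr_zero /\
  (forall a b : F, f (mr_mul a b) = mr_mul (f a) (f b)) /\
  f mr_one = mr_one.

Record mr_morphism (F K : multiring) := MrMorphism {
  mr_fun :> F -> K;
  mr_fun_morph : is_mr_morphism F K mr_fun
}.
Arguments mr_fun {F K}.

Lemma id_is_mr_morphism (F : multiring) : is_mr_morphism F F (fun x => x).
Proof. repeat split; auto. Qed.

Definition mr_id (F : multiring) : mr_morphism F F :=
  MrMorphism F F (fun x => x) (id_is_mr_morphism F).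

Lemma comp_is_mr_morphism (F K L : multiring) (g : mr_morphism K L)
  (f : mr_morphism F K) : is_mr_morphism F L (fun x => g (f x)).
Proof.
  destruct (mr_fun_morph _ _ f) as [f1 [f2 [f3 [f4 f5]]]].
  destruct (mr_fun_morph _ _ g) as [g1 [g2 [g3 [g4 g5]]]].
  repeat split; intros.
  - apply g1, f1; assumption.
  - rewrite f2; apply g2.
  - rewrite f3; apply g3.
  - rewrite f4; apply g4.
  - rewrite f5; apply g5.
Qed.

Definition mr_comp (F K L : multiring) (g : mr_morphism K L)
  (f : mr_morphism F K) : mr_morphism F L :=
  MrMorphism F L (fun x => g (f x)) (comp_is_mr_morphism F K L g f).

Definition sg_equiv3 (G : Type) (eqv : G -> G -> G -> G -> Prop)
  (a1 a2 a3 b1 b2 b3 : G) : Prop :=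
  exists x y z, eqv a1 x b1 y /\ eqv a2 a3 x z /\ eqv b2 b3 y z.

(* (G, *, 1) a group of exponent 2, m1 the distinguished element -1, and
   eqv a b c d meaning <a,b> == <c,d>; -a is m1 * a. *)
Definition is_special_group (G : Type) (mul : G -> G -> G) (one m1 : G)
  (eqv : G -> G -> G -> G -> Prop) : Prop :=
  (forall a b c, mul a (mul b c) = mul (mul a b) c) /\
  (forall a, mul one a = a) /\ (forall a, mul a one = a) /\
  (forall a, mul a a = one) /\
  (forall a b, eqv a b a b) /\
  (forall a b c d, eqv a b c d -> eqv c d a b) /\
  (forall a b c d e f, eqv a b c d -> eqv c d e f -> eqv a b e f) /\
  (forall a b, eqv a b b a) /\
  (forall a, eqv a (mul m1 a) one m1) /\
  (forall a b c d, eqv a b c d -> mul a b = mul c d) /\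
  (forall a b c d, eqv a b c d -> eqv a (mul m1 c) (mul m1 b) d) /\
  (forall a b c d g, eqv a b c d -> eqv (mul g a) (mul g b) (mul g c) (mul g d)) /\
  (forall a1 a2 a3 b1 b2 b3 c1 c2 c3,
     sg_equiv3 G eqv a1 a2 a3 b1 b2 b3 -> sg_equiv3 G eqv b1 b2 b3 c1 c2 c3 ->
     sg_equiv3 G eqv a1 a2 a3 c1 c2 c3).

Definition is_sg_morphism (G : Type) (mulG : G -> G -> G) (m1G : G)
  (eqvG : G -> G -> G -> G -> Prop)
  (H : Type) (mulH : H -> H -> H) (m1H : H) (eqvH : H -> H -> H -> H -> Prop)
  (f : G -> H) : Prop :=
  (forall a b, f (mulG a b) = mulH (f a) (f b)) /\
  f m1G = m1H /\
  (forall a b c d, eqvG a b c d -> eqvH (f a) (f b) (f c) (f d)).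

Definition Fbullet (F : multiring) : Type := { x : F | x <> mr_zero }.

Lemma mf_mul_nz (F : multiring) (HF : is_multifield F) (a b : F) :
  a <> mr_zero -> b <> mr_zero -> mr_mul a b <> mr_zero.
Proof.
  intros Ha Hb Hab. destruct HF as [_ Hinv]. destruct (Hinv a Ha) as [a' Ha'].
  destruct (mr_ax F) as [_ _ _ _ _ Massoc Mcomm Mone _ Mzero _].
  apply Hb.
  rewrite <- (Mone b), <- Ha', (Mcomm a a'), <- Massoc, Hab. apply Mzero.
Qed.

Lemma mr_neg_neg (F : multiring) (x : F) : mr_neg (mr_neg x) = x.
Proof.
  destruct (mr_ax F) as [_ Rev Zero _ _ _ _ _ _ _ _].
  assert (H0 : mr_add mr_zero x x) by (apply Zero; reflexivity).
  destruct (Rev _ _ _ H0) as [H1 _].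
  destruct (Rev _ _ _ H1) as [H2 _].
  symmetry. apply (proj1 (Zero _ _) H2).
Qed.

Lemma mr_neg_zero (F : multiring) : @mr_neg F mr_zero = mr_zero.
Proof.
  destruct (mr_ax F) as [_ Rev Zero _ _ _ _ _ _ _ _].
  assert (H0 : @mr_add F mr_zero mr_zero mr_zero) by (apply Zero; reflexivity).
  destruct (Rev _ _ _ H0) as [H1 _].
  symmetry; apply (proj1 (Zero _ _) H1).
Qed.

Lemma mf_neg_one_nz (F : multiring) (HF : is_multifield F) :
  @mr_neg F mr_one <> mr_zero.
Proof.
  intros H. apply (proj1 HF).
  rewrite <- (mr_neg_neg F mr_one), H. apply mr_neg_zero.
Qed.

Definition Fb_mul (F : special_multifield) (a b : Fbullet F) : Fbullet F :=
  exist _ (mr_mul (proj1_sig a) (proj1_sig b))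
    (mf_mul_nz F (smf_mf F) _ _ (proj2_sig a) (proj2_sig b)).

Definition Fb_one (F : special_multifield) : Fbullet F :=
  exist _ mr_one (proj1 (smf_mf F)).

Definition Fb_m1 (F : special_multifield) : Fbullet F :=
  exist _ (mr_neg mr_one) (mf_neg_one_nz F (smf_mf F)).

Definition Fb_equiv (F : special_multifield) (a b c d : Fbullet F) : Prop :=
  mr_mul (proj1_sig a) (proj1_sig b) = mr_mul (proj1_sig c) (proj1_sig d) /\
  mr_add (proj1_sig c) (proj1_sig d) (proj1_sig a).

Lemma mr_morphism_nz (F K : special_multifield) (f : mr_morphism F K) (a : F) :
  a <> mr_zero -> f a <> mr_zero.
Proof.
  intros Ha Hfa. destruct (proj2 (smf_mf F) a Ha) as [a' Ha'].
  destruct (mr_fun_morph _ _ f) as [_ [_ [_ [f4 f5]]]].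
  apply (proj1 (smf_mf K)).
  rewrite <- f5, <- Ha', f4, Hfa.
  destruct (mr_ax K) as [_ _ _ _ _ _ Mcomm _ _ Mzero _].
  rewrite Mcomm. apply Mzero.
Qed.

Definition restr (F K : special_multifield) (f : mr_morphism F K)
  (a : Fbullet F) : Fbullet K :=
  exist _ (f (proj1_sig a)) (mr_morphism_nz F K f _ (proj2_sig a)).

From Stdlib Require Import ProofIrrelevance.

(* Axioms (i)-(iv) make F^bullet a group of exponent 2 on which <a,b> == <c,d>
   is an equivalence satisfying SG1-SG3, and SG4, SG5 follow from reversibility
   and distributivity of the multivalued sum.  The real work is SG6.  Call a
   triple <a, b, ab> normal: axiom (v) says exactly that ==3 allows swapping
   the first two entries of a normal triple, and scaling any triple by its
   discriminant (the product of its entries) makes it normal.  Hence ==3 is stable under permuting the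
   entries of either side and under replacing two entries by an equivalent
   pair, and transitivity follows by rewriting the middle triple through the
   three witnesses. *)

Section MultiringFacts.
Context {F : multiring}.
Local Notation add := (@mr_add F).
Local Notation mul := (@mr_mul F).
Local Notation neg := (@mr_neg F).

Lemma mr_mulA (a b c : F) : mul a (mul b c) = mul (mul a b) c.
Proof. exact (ax_mul_assoc _ _ _ _ _ _ (mr_ax F) a b c). Qed.

Lemma mr_mulC (a b : F) : mul a b = mul b a.
Proof. exact (ax_mul_comm _ _ _ _ _ _ (mr_ax F) a b). Qed.

Lemma mr_mul1l (a : F) : mul mr_one a = a.
Proof. exact (ax_mul_one_l _ _ _ _ _ _ (mr_ax F) a). Qed.

Lemma mr_mul1r (a : F) : mul a mr_one = a.
Proof. exact (ax_mul_one_r _ _ _ _ _ _ (mr_ax F) a). Qed.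

Lemma mr_mulr0 (a : F) : mul a mr_zero = mr_zero.
Proof. exact (ax_mul_zero _ _ _ _ _ _ (mr_ax F) a). Qed.

Lemma mr_addC (a b c : F) : add a b c -> add b a c.
Proof. apply (ax_add_comm _ _ _ _ _ _ (mr_ax F)). Qed.

Lemma mr_add_rev (a b c : F) : add a b c -> add c (neg b) a /\ add (neg a) c b.
Proof. apply (ax_add_rev _ _ _ _ _ _ (mr_ax F)). Qed.

Lemma mr_add0l (a b : F) : add mr_zero a b <-> b = a.
Proof. apply (ax_add_zero _ _ _ _ _ _ (mr_ax F)). Qed.

Lemma mr_add_mulr (a b c d : F) : add a b c -> add (mul a d) (mul b d) (mul c d).
Proof. apply (ax_distr _ _ _ _ _ _ (mr_ax F)). Qed.

Lemma mr_mulN1l (a : F) : mul (neg mr_one) a = neg a.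
Proof.
  assert (one_add : add mr_zero mr_one mr_one) by (apply mr_add0l; reflexivity).
  destruct (mr_add_rev _ _ _ one_add) as [zero_in_one_sub_one _].
  apply (mr_add_mulr _ _ _ a) in zero_in_one_sub_one.
  rewrite mr_mul1l, (mr_mulC mr_zero), mr_mulr0 in zero_in_one_sub_one.
  destruct (mr_add_rev _ _ _ zero_in_one_sub_one) as [_ H].
  apply mr_add0l, mr_addC, H.
Qed.

End MultiringFacts.

Lemma Fbullet_eq (F : multiring) (a b : Fbullet F) : proj1_sig a = proj1_sig b -> a = b.
Proof.
  destruct a as [a Ha], b as [b Hb]; simpl; intros <-.
  f_equal; apply proof_irrelevance.
Qed.

Section TernaryEquivalence.
Variables (G : Type) (mul : G -> G -> G) (one : G) (eqv : G -> G -> G -> G -> Prop).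
Hypothesis mulA : forall a b c, mul a (mul b c) = mul (mul a b) c.
Hypothesis mulC : forall a b, mul a b = mul b a.
Hypothesis mul1g : forall a, mul one a = a.
Hypothesis mulgg : forall a, mul a a = one.
Hypothesis eqv_sym : forall a b c d, eqv a b c d -> eqv c d a b.
Hypothesis eqv_trans :
  forall a b c d e f, eqv a b c d -> eqv c d e f -> eqv a b e f.
Hypothesis eqv_swap : forall a b, eqv a b b a.
Hypothesis eqv_mul : forall a b c d, eqv a b c d -> mul a b = mul c d.
Hypothesis eqv_scale :
  forall a b c d g, eqv a b c d -> eqv (mul g a) (mul g b) (mul g c) (mul g d).

Local Notation eqv3 := (sg_equiv3 G eqv).

Hypothesis eqv3_swap12_normal : forall a b c d,
  eqv3 a b (mul a b) c d (mul c d) -> eqv3 b a (mul a b) c d (mul c d).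

Lemma mulKg g x : mul g (mul g x) = x.
Proof. rewrite mulA, mulgg, mul1g; reflexivity. Qed.

Lemma mul_scale2 g a b : mul (mul g a) (mul g b) = mul a b.
Proof. rewrite <- mulA, (mulA a g b), (mulC a g), <- (mulA g a b); apply mulKg. Qed.

Lemma scale_discriminant_normal p u v w :
  p = mul u (mul v w) -> mul p w = mul (mul p u) (mul p v).
Proof.
  intros ->. rewrite mul_scale2, <- !mulA, mulgg, (mulC v one), mul1g; reflexivity.
Qed.

Lemma eqv3_sym a1 a2 a3 b1 b2 b3 :
  eqv3 a1 a2 a3 b1 b2 b3 -> eqv3 b1 b2 b3 a1 a2 a3.
Proof. intros (x & y & z & H1 & H2 & H3). exists y, x, z. auto. Qed.

Lemma eqv3_mul a1 a2 a3 b1 b2 b3 :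
  eqv3 a1 a2 a3 b1 b2 b3 -> mul a1 (mul a2 a3) = mul b1 (mul b2 b3).
Proof.
  intros (x & y & z & H1 & H2 & H3).
  rewrite (eqv_mul _ _ _ _ H2), (eqv_mul _ _ _ _ H3), !mulA, (eqv_mul _ _ _ _ H1).
  reflexivity.
Qed.

Lemma eqv3_scale g a1 a2 a3 b1 b2 b3 : eqv3 a1 a2 a3 b1 b2 b3 ->
  eqv3 (mul g a1) (mul g a2) (mul g a3) (mul g b1) (mul g b2) (mul g b3).
Proof.
  intros (x & y & z & H1 & H2 & H3). exists (mul g x), (mul g y), (mul g z). auto.
Qed.

Lemma eqv3_eqv23 a1 a2 a3 b1 b2 b3 c2 c3 :
  eqv3 a1 a2 a3 b1 b2 b3 -> eqv b2 b3 c2 c3 -> eqv3 a1 a2 a3 b1 c2 c3.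
Proof.
  intros (x & y & z & H1 & H2 & H3) E. exists x, y, z.
  split; [exact H1 | split; [exact H2 | exact (eqv_trans _ _ _ _ _ _ (eqv_sym _ _ _ _ E) H3)]].
Qed.

Lemma eqv3_swap23 a1 a2 a3 b1 b2 b3 :
  eqv3 a1 a2 a3 b1 b2 b3 -> eqv3 a1 a2 a3 b1 b3 b2.
Proof. intros H. exact (eqv3_eqv23 _ _ _ _ _ _ _ _ H (eqv_swap b2 b3)). Qed.

(* Scale both triples by their common discriminant p to make them normal,
   swap there, and scale back by p. *)
Lemma eqv3_swap12 a1 a2 a3 b1 b2 b3 :
  eqv3 a1 a2 a3 b1 b2 b3 -> eqv3 a1 a2 a3 b2 b1 b3.
Proof.
  intros H. set (p := mul b1 (mul b2 b3)).
  assert (normal_b : mul p b3 = mul (mul p b1) (mul p b2))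
    by (apply scale_discriminant_normal; reflexivity).
  assert (normal_a : mul p a3 = mul (mul p a1) (mul p a2))
    by (apply scale_discriminant_normal; symmetry; apply eqv3_mul, H).
  apply eqv3_sym, (eqv3_scale p) in H. rewrite normal_b, normal_a in H.
  apply eqv3_swap12_normal in H. rewrite <- normal_b, <- normal_a in H.
  apply (eqv3_scale p) in H. rewrite !mulKg in H.
  apply eqv3_sym, H.
Qed.

Lemma eqv3_eqv12 a1 a2 a3 b1 b2 b3 c1 c2 :
  eqv3 a1 a2 a3 b1 b2 b3 -> eqv b1 b2 c1 c2 -> eqv3 a1 a2 a3 c1 c2 b3.
Proof.
  intros H E.
  apply eqv3_swap12, eqv3_swap23, eqv3_swap12, eqv3_swap23 in H.
  apply eqv3_swap23, eqv3_swap12, (eqv3_eqv23 _ _ _ _ _ _ _ _ H), E.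
Qed.

Lemma eqv3_trans a1 a2 a3 b1 b2 b3 c1 c2 c3 :
  eqv3 a1 a2 a3 b1 b2 b3 -> eqv3 b1 b2 b3 c1 c2 c3 -> eqv3 a1 a2 a3 c1 c2 c3.
Proof.
  intros H (x & y & z & H1 & H2 & H3).
  apply (eqv3_eqv23 _ _ _ _ _ _ _ _ H) in H2.
  apply (eqv3_eqv12 _ _ _ _ _ _ _ _ H2) in H1.
  exact (eqv3_eqv23 _ _ _ _ _ _ _ _ H1 (eqv_sym _ _ _ _ H3)).
Qed.

End TernaryEquivalence.

Section SpecialMultifield.
Variable F : special_multifield.
Local Notation add := (@mr_add F).
Local Notation mul := (@mr_mul F).
Local Notation neg := (@mr_neg F).
Local Notation nz a := (a <> @mr_zero F).

Lemma smf_mulss (a : F) : nz a -> mul a a = mr_one.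
Proof. destruct (smf_special F) as (sq & _); apply sq. Qed.

Lemma smf_add_opp (a x : F) : nz a -> add a (neg a) x.
Proof. destruct (smf_special F) as (_ & opp & _); apply opp. Qed.

Lemma smf_equiv_sym (a b c d : F) : nz a -> nz b -> nz c -> nz d ->
  mul a b = mul c d -> add c d a -> add a b c.
Proof. destruct (smf_special F) as (_ & _ & iii & _); apply iii. Qed.

Lemma smf_equiv_trans (a b c d e f : F) :
  nz a -> nz b -> nz c -> nz d -> nz e -> nz f ->
  mul a b = mul c d -> mul c d = mul e f -> add c d a -> add e f c -> add e f a.
Proof. destruct (smf_special F) as (_ & _ & _ & iv & _); apply iv. Qed.

Lemma smf_add_self (a b : F) : nz a -> add a b a.
Proof.
  intros Ha.
  destruct (mr_add_rev _ _ _ (mr_addC _ _ _ (smf_add_opp a b Ha))) as [_ H].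
  rewrite mr_neg_neg in H; exact H.
Qed.

Lemma smf_mulK (g x : F) : nz g -> mul g (mul g x) = x.
Proof. intros Hg. rewrite mr_mulA, smf_mulss, mr_mul1l; auto. Qed.

Lemma smf_mul_scale2 (g a b : F) : nz g -> mul (mul g a) (mul g b) = mul a b.
Proof.
  intros Hg. rewrite <- mr_mulA, (mr_mulA a g b), (mr_mulC a g), <- (mr_mulA g a b).
  apply smf_mulK, Hg.
Qed.

Lemma smf_mul_exchange (a b c d : F) :
  nz b -> nz c -> mul a b = mul c d -> mul a c = mul b d.
Proof.
  intros Hb Hc E. rewrite <- (smf_mulK b (mul a c) Hb). f_equal.
  rewrite mr_mulA, (mr_mulC b a), E, (mr_mulC (mul c d) c). apply smf_mulK, Hc.
Qed.

Local Notation Fb := (Fbullet F).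
Local Notation Fmul := (Fb_mul F).
Local Notation equiv := (Fb_equiv F).

Lemma Fb_mulA (a b c : Fb) : Fmul a (Fmul b c) = Fmul (Fmul a b) c.
Proof. apply Fbullet_eq, mr_mulA. Qed.

Lemma Fb_mulC (a b : Fb) : Fmul a b = Fmul b a.
Proof. apply Fbullet_eq, mr_mulC. Qed.

Lemma Fb_mul1l (a : Fb) : Fmul (Fb_one F) a = a.
Proof. apply Fbullet_eq, mr_mul1l. Qed.

Lemma Fb_mul1r (a : Fb) : Fmul a (Fb_one F) = a.
Proof. apply Fbullet_eq, mr_mul1r. Qed.

Lemma Fb_mulss (a : Fb) : Fmul a a = Fb_one F.
Proof. apply Fbullet_eq, smf_mulss, (proj2_sig a). Qed.

Lemma Fb_equiv_refl (a b : Fb) : equiv a b a b.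
Proof. split; [reflexivity | apply smf_add_self, (proj2_sig a)]. Qed.

Lemma Fb_equiv_sym (a b c d : Fb) : equiv a b c d -> equiv c d a b.
Proof.
  destruct a as [a Ha], b as [b Hb], c as [c Hc], d as [d Hd].
  intros [E A]; split; simpl in *; [symmetry; exact E | apply (smf_equiv_sym a b c d); assumption].
Qed.

Lemma Fb_equiv_trans (a b c d e f : Fb) :
  equiv a b c d -> equiv c d e f -> equiv a b e f.
Proof.
  destruct a as [a Ha], b as [b Hb], c as [c Hc], d as [d Hd], e as [e He], f as [f Hf].
  intros [E A] [E' A']; split; simpl in *; [congruence | apply (smf_equiv_trans a b c d e f); assumption].
Qed.

Lemma Fb_equiv_swap (a b : Fb) : equiv a b b a.
Proof.
  split; [apply mr_mulC | apply mr_addC, smf_add_self, (proj2_sig a)].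
Qed.

Lemma Fb_equiv_hyperbolic (a : Fb) : equiv a (Fmul (Fb_m1 F) a) (Fb_one F) (Fb_m1 F).
Proof.
  destruct a as [a Ha]; split; simpl.
  - rewrite mr_mulA, (mr_mulC a), <- mr_mulA, smf_mulss, mr_mul1l, mr_mul1r; auto.
  - apply smf_add_opp, (proj1 (smf_mf F)).
Qed.

Lemma Fb_equiv_mul (a b c d : Fb) : equiv a b c d -> Fmul a b = Fmul c d.
Proof. intros [E _]; apply Fbullet_eq, E. Qed.

Lemma Fb_equiv_cross (a b c d : Fb) :
  equiv a b c d -> equiv a (Fmul (Fb_m1 F) c) (Fmul (Fb_m1 F) b) d.
Proof.
  destruct a as [a Ha], b as [b Hb], c as [c Hc], d as [d Hd].
  intros [E A]; split; simpl in *.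
  - rewrite mr_mulA, (mr_mulC a), <- !mr_mulA. f_equal.
    apply smf_mul_exchange; assumption.
  - assert (A' : add a b d).
    { apply (smf_equiv_sym a b d c); try assumption.
      - rewrite E; apply mr_mulC.
      - apply mr_addC, A. }
    rewrite !mr_mulN1l. apply mr_addC, (proj1 (mr_add_rev _ _ _ A')).
Qed.

Lemma Fb_equiv_scale (a b c d g : Fb) :
  equiv a b c d -> equiv (Fmul g a) (Fmul g b) (Fmul g c) (Fmul g d).
Proof.
  destruct a as [a Ha], b as [b Hb], c as [c Hc], d as [d Hd], g as [g Hg].
  intros [E A]; split; simpl in *.
  - rewrite !smf_mul_scale2; assumption.
  - apply (mr_add_mulr _ _ _ g) in A. rewrite !(mr_mulC _ g) in A. exact A.
Qed.

(* Axiom (v), read through b(ab) = a and d(cd) = c. *)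
Lemma Fb_equiv3_swap12_normal (a b c d : Fb) :
  sg_equiv3 Fb equiv a b (Fmul a b) c d (Fmul c d) ->
  sg_equiv3 Fb equiv b a (Fmul a b) c d (Fmul c d).
Proof.
  destruct a as [a Ha], b as [b Hb], c as [c Hc], d as [d Hd].
  intros ([x Hx] & [y Hy] & [z Hz] & [E1 A1] & [E2 A2] & [E3 A3]); simpl in *.
  rewrite (mr_mulC a b), smf_mulK in E2 by assumption.
  rewrite (mr_mulC c d), smf_mulK in E3 by assumption.
  destruct (smf_special F) as (_ & _ & _ & _ & axiom_v).
  destruct (axiom_v a b c d Ha Hb Hc Hd)
    as (t & v & w & Ht & Hv & Hw & F1 & F2 & F3 & G1 & G2 & G3).
  { exists x, y, z; repeat split; assumption. }
  exists (exist _ t Ht), (exist _ v Hv), (exist _ w Hw).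
  repeat split; simpl; try assumption.
  - rewrite smf_mulK by assumption; exact F2.
  - rewrite (mr_mulC c d), smf_mulK by assumption; exact F3.
Qed.

Theorem Fbullet_special_group : is_special_group Fb Fmul (Fb_one F) (Fb_m1 F) equiv.
Proof.
  refine (conj Fb_mulA (conj Fb_mul1l (conj Fb_mul1r (conj Fb_mulss
    (conj Fb_equiv_refl (conj Fb_equiv_sym (conj Fb_equiv_trans (conj Fb_equiv_swap
    (conj Fb_equiv_hyperbolic (conj Fb_equiv_mul (conj Fb_equiv_cross
    (conj Fb_equiv_scale _)))))))))))).
  exact (eqv3_trans Fb Fmul (Fb_one F) equiv Fb_mulA Fb_mulC Fb_mul1l Fb_mulss
           Fb_equiv_sym Fb_equiv_trans Fb_equiv_swap Fb_equiv_mul Fb_equiv_scale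
           Fb_equiv3_swap12_normal).
Qed.

End SpecialMultifield.

Lemma restr_is_sg_morphism (F K : special_multifield) (sigma : mr_morphism F K) :
  is_sg_morphism (Fbullet F) (Fb_mul F) (Fb_m1 F) (Fb_equiv F)
                 (Fbullet K) (Fb_mul K) (Fb_m1 K) (Fb_equiv K) (restr F K sigma).
Proof.
  destruct (mr_fun_morph _ _ sigma)
    as (sigma_add & sigma_neg & _ & sigma_mul & sigma_one).
  split; [|split].
  - intros a b; apply Fbullet_eq, sigma_mul.
  - apply Fbullet_eq; simpl. rewrite sigma_neg, sigma_one; reflexivity.
  - intros a b c d [E A]; split; simpl.
    + rewrite <- !sigma_mul, E; reflexivity.
    + apply sigma_add, A.
Qed.

Lemma restr_id (F : special_multifield) (a : Fbullet F) : restr F F (mr_id F) a = a.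
Proof. apply Fbullet_eq; reflexivity. Qed.

Lemma restr_comp (F K L : special_multifield) (tau : mr_morphism K L)
  (sigma : mr_morphism F K) (a : Fbullet F) :
  restr F L (mr_comp F K L tau sigma) a = restr K L tau (restr F K sigma a).
Proof. apply Fbullet_eq; reflexivity. Qed.

Theorem corollary5p11 :
  (* object part: F^bullet is a special group *)
  (forall F : special_multifield,
     is_special_group (Fbullet F) (Fb_mul F) (Fb_one F) (Fb_m1 F) (Fb_equiv F)) /\
  (* morphism part: the restriction of a multiring morphism is a special group morphism *)
  (forall (F K : special_multifield) (sigma : mr_morphism F K),
     is_sg_morphism (Fbullet F) (Fb_mul F) (Fb_m1 F) (Fb_equiv F)
                    (Fbullet K) (Fb_mul K) (Fb_m1 K) (Fb_equiv K)
                    (restr F K sigma)) /\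
  (* functoriality: identities *)
  (forall (F : special_multifield) (a : Fbullet F), restr F F (mr_id F) a = a) /\
  (* functoriality: composition *)
  (forall (F K L : special_multifield) (tau : mr_morphism K L)
          (sigma : mr_morphism F K) (a : Fbullet F),
     restr F L (mr_comp F K L tau sigma) a = restr K L tau (restr F K sigma a)).
Proof.
  split; [exact Fbullet_special_group |].
  split; [exact restr_is_sg_morphism |].
  split; [exact restr_id | exact restr_comp].
Qed.
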